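(* Let $(\Sigma,\mathsf{ar})$ be an at most countable binding signature with associated functors $F,F_\alpha$ and maps $a^{(n)}:F^n1\to F_\alpha^n1$. Then for every $n$, $a^{(n)}$ is surjective, has orbit-finite fibres, and is a safe map.
   Context: Nominal sets over a countably infinite set $\mathcal V$ of names; $[\mathcal V]X$ the name-abstraction with classes $\langle x\rangle u$. Binding signature: symbols $\mathsf{op}\in\Sigma$ with arities finite lists $(n_1,\dots,n_k)$. $F_\alpha X=\mathcal V+\coprod_{\mathsf{op}}\prod_i[\mathcal V]^{n_i}X$, $FX=\mathcal V+\coprod_{\mathsf{op}}\prod_i(\mathcal V^{n_i}\times X)$, $q_X:FX\to F_\alpha X$ identity on $\mathcal V$ and $(x^1,\dots,x^n,u)\mapsto\langle x^1\rangle\cdots\langle x^n\rangle u$ on each factor. $1=\{*\}$; $a^{(0)}=\mathrm{id}_1$, $a^{(n+1)}=q_{F_\alpha^n1}\circ F(a^{(n)})$. An orbit is an equivalence class of $u\sim\pi\cdot u$; a map has orbit-finite fibres if each fibre lies in finitely many orbits. $u$ is $f$-safe if $|\mathsf{supp}(u)|=\max\{|\mathsf{supp}(v)|:v\in f^{-1}(f(u))\}$; $f$ is safe if every element of the codomain has an $f$-safe preimage. *)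

From mathcomp Require Import all_boot.
From Stdlib Require Import ClassicalEpsilon.

Set Implicit Arguments.
Unset Strict Implicit.
Unset Printing Implicit Defensive.

(* Names: the countably infinite set V is taken to be nat.                *)
Record perm := Perm {
  pf : nat -> nat;
  pinv : nat -> nat;
  pfK : cancel pf pinv;
  pinvK : cancel pinv pf;
  pfin : exists N, forall c, N <= c -> pf c = c }.

Definition swapf (a b : nat) (c : nat) : nat :=
  if c == a then b else if c == b then a else c.

Lemma swapfK a b : cancel (swapf a b) (swapf a b).
Proof.
move=> c; rewrite /swapf.
case: (eqVneq c a) => [->|ca].
  by rewrite eqxx; case: (eqVneq b a) => [->|ba]; rewrite ?eqxx // (negbTE ba) eqxx.
case: (eqVneq c b) => [->|cb].
  by rewrite eqxx.
by rewrite (negbTE ca) (negbTE cb).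
Qed.

Lemma swapf_fin a b : exists N, forall c, N <= c -> swapf a b c = c.
Proof.
exists (maxn a b).+1 => c Hc; rewrite /swapf.
have ha : c != a.
  by apply/eqP=> E; move: Hc; rewrite E ltnNge leq_maxl.
have hb : c != b.
  by apply/eqP=> E; move: Hc; rewrite E ltnNge leq_maxr.
by rewrite (negbTE ha) (negbTE hb).
Qed.

Definition swap (a b : nat) : perm :=
  Perm (swapfK a b) (swapfK a b) (swapf_fin a b).

(* Sets with a permutation action (the nominal sets below are built as    *)
(* such; finite support is a property of the concrete constructions).     *)
Record PSet := PS { car : Type; act : perm -> car -> car }.
Arguments act : clear implicits.

Definition supports (X : PSet) (A : seq nat) (x : car X) : Prop :=
  forall p : perm, (forall c, c \in A -> pf p c = c) -> act X p x = x.
Arguments supports : clear implicits.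

Definition fresh (X : PSet) (c : nat) (x : car X) : Prop :=
  exists A : seq nat, c \notin A /\ supports X A x.
Arguments fresh : clear implicits.

(* c \in supp x (supp x = the least finite support) *)
Definition in_supp (X : PSet) (c : nat) (x : car X) : Prop := ~ fresh X c x.
Arguments in_supp : clear implicits.

Definition supp_card (X : PSet) (x : car X) (k : nat) : Prop :=
  exists l : seq nat, uniq l /\ (forall c, c \in l <-> in_supp X c x) /\ size l = k.
Arguments supp_card : clear implicits.

(* Name abstraction [V]X = (V x X)/~ (Pitts):                             *)
Definition alpha (X : PSet) (p q : nat * car X) : Prop :=
  exists c, [/\ c <> p.1, c <> q.1, fresh X c p.2, fresh X c q.2 &
                act X (swap p.1 c) p.2 = act X (swap q.1 c) q.2].
Arguments alpha : clear implicits.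

Definition cls (X : PSet) (p : nat * car X) : nat * car X -> Prop := alpha X p.
Arguments cls : clear implicits.

Definition absT (X : PSet) : Type :=
  {C : nat * car X -> Prop | exists p : nat * car X, C = cls X p}.

Definition mk_abs (X : PSet) (p : nat * car X) : absT X :=
  exist (fun C => exists p, C = cls X p) (cls X p) (ex_intro _ p erefl).
Arguments mk_abs : clear implicits.

Definition abs_rep (X : PSet) (C : absT X) : nat * car X :=
  proj1_sig (constructive_indefinite_description _ (proj2_sig C)).

Definition AbsP (X : PSet) : PSet :=
  @PS (absT X) (fun p C => let r := abs_rep C in mk_abs X (pf p r.1, act X p r.2)).

(* [V]^n X, outermost binder first *)
Fixpoint AbsN (n : nat) (X : PSet) : PSet :=
  match n with 0 => X | n'.+1 => AbsP (AbsN n' X) end.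

Fixpoint abs_list (n : nat) (X : PSet) (l : seq nat) (u : car X) : car (AbsN n X) :=
  match n return car (AbsN n X) with
  | 0 => u
  | n'.+1 => mk_abs (AbsN n' X) (head 0 l, abs_list n' (behead l) u)
  end.
Arguments abs_list : clear implicits.

Fixpoint Prod (ns : seq nat) (Y : nat -> Type) : Type :=
  match ns with [::] => unit | n :: ns' => (Y n * Prod ns' Y)%type end.

Fixpoint pmap (ns : seq nat) (Y Z : nat -> Type) (f : forall n, Y n -> Z n)
  : Prod ns Y -> Prod ns Z :=
  match ns return Prod ns Y -> Prod ns Z with
  | [::] => fun _ => tt
  | n :: ns' => fun p => (f n p.1, pmap f p.2)
  end.

Section Functors.
Variables (S : Type) (ar : S -> seq nat).

Definition FT (X : PSet) : Type :=
  (nat + {o : S & Prod (ar o) (fun n => (n.-tuple nat * car X)%type)})%type.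

Definition FP (X : PSet) : PSet :=
  @PS (FT X) (fun p u => match u with
    | inl c => inl (pf p c)
    | inr (existT o t) =>
        inr (existT _ o (pmap (fun n (tx : n.-tuple nat * car X) =>
                                 (map_tuple (pf p) tx.1, act X p tx.2)) t))
    end).

Definition Fmap (X Y : PSet) (f : car X -> car Y) (u : car (FP X)) : car (FP Y) :=
  match u with
  | inl c => inl c
  | inr (existT o t) =>
      inr (existT _ o (pmap (fun n (tx : n.-tuple nat * car X) => (tx.1, f tx.2)) t))
  end.

Definition FaT (X : PSet) : Type :=
  (nat + {o : S & Prod (ar o) (fun n => car (AbsN n X))})%type.

Definition FaP (X : PSet) : PSet :=
  @PS (FaT X) (fun p u => match u with
    | inl c => inl (pf p c)
    | inr (existT o t) =>
        inr (existT _ o (pmap (fun n (z : car (AbsN n X)) => act (AbsN n X) p z) t))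
    end).

Definition qmap (X : PSet) (u : car (FP X)) : car (FaP X) :=
  match u with
  | inl c => inl c
  | inr (existT o t) =>
      inr (existT _ o (pmap (fun n (tx : n.-tuple nat * car X) =>
                               abs_list n X (val tx.1) tx.2) t))
  end.

Definition oneP : PSet := @PS unit (fun _ x => x).

Fixpoint Fn (n : nat) : PSet := match n with 0 => oneP | n'.+1 => FP (Fn n') end.
Fixpoint Fan (n : nat) : PSet := match n with 0 => oneP | n'.+1 => FaP (Fan n') end.

Fixpoint amap (n : nat) : car (Fn n) -> car (Fan n) :=
  match n return car (Fn n) -> car (Fan n) with
  | 0 => fun u => u
  | n'.+1 => fun u => qmap (Fmap (@amap n') u)
  end.

End Functors.

Definition surj_map (X Y : PSet) (f : car X -> car Y) : Prop :=
  forall y, exists x, f x = y.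

Definition orbit_finite_fibres (X Y : PSet) (f : car X -> car Y) : Prop :=
  forall y, exists reps : seq (car X),
    forall u, f u = y -> exists2 r, List.In r reps & exists p : perm, u = act X p r.

Definition f_safe (X Y : PSet) (f : car X -> car Y) (u : car X) : Prop :=
  exists k, supp_card X u k /\
    forall v, f v = f u -> exists2 k', supp_card X v k' & k' <= k.

Definition safe_map (X Y : PSet) (f : car X -> car Y) : Prop :=
  forall y, exists2 u, f u = y & f_safe f u.

From Pilot Require Import Defs.
From mathcomp Require Import all_boot.
From Stdlib Require Import ProofIrrelevance FunctionalExtensionality.
From Stdlib Require Import PropExtensionality ClassicalEpsilon Eqdep_dec.
Set Implicit Arguments.
Unset Strict Implicit.
Unset Printing Implicit Defensive.

(* Raw terms (elements of F^n 1) are concrete: a permutation acts on them by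
   renaming ('act_ren') and the support of a term is the set of names occurring
   in it ('in_supp_names').  The key fact is that a^(n) is equivariant and that
   terms with the same image have the same shape, i.e. agree once every name is
   replaced by 0 ('amap_shape').  It rests on  <x1>..<xk>u = <y1>..<yk>v  forcing
   v to be a permuted u ('abs_list_inv'), which needs the theory of
   alpha-equivalence and name abstraction over an arbitrary nominal set; this is
   developed first, followed by the calculus of raw terms.  Then:
   - surjectivity: every iterated abstraction has a representative;
   - orbit-finiteness: each term is a permutation of its normal form, whose names
     lie below its number of name occurrences, and the terms of a given shape
     with names in a given finite set can be listed ('enumT_complete');
   - safety: the support sizes in a fibre are bounded by the common number of
     name occurrences, so one of them is maximal.
   Countability of the signature is only used to decide equality of symbols. *)

Lemma pf_inj (p : perm) : injective (pf p).
Proof. exact: can_inj (@pfK p). Qed.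

Lemma id_perm_fin : exists N, forall c, N <= c -> (@id nat) c = c.
Proof. by exists 0. Qed.
Definition id_perm : perm := Perm (fun c => erefl) (fun c => erefl) id_perm_fin.

Section Composition.
Variables p q : perm.

Lemma comp_perm_K : cancel (pf p \o pf q) (pinv q \o pinv p).
Proof. by move=> c /=; rewrite !pfK. Qed.

Lemma comp_perm_Ki : cancel (pinv q \o pinv p) (pf p \o pf q).
Proof. by move=> c /=; rewrite !pinvK. Qed.

Lemma comp_perm_fin : exists N, forall c, N <= c -> (pf p \o pf q) c = c.
Proof.
case: (pfin p) => N1 H1; case: (pfin q) => N2 H2.
exists (maxn N1 N2) => c Hc /=; rewrite H2 ?H1 //; apply: leq_trans Hc.
  exact: leq_maxl.
exact: leq_maxr.
Qed.

Definition comp_perm : perm := Perm comp_perm_K comp_perm_Ki comp_perm_fin.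

Lemma pinv_fin : exists N, forall c, N <= c -> pinv p c = c.
Proof. by case: (pfin p) => N H; exists N => c Hc; rewrite -{1}(H c Hc) pfK. Qed.

Definition inv_perm : perm := Perm (@pinvK p) (@pfK p) pinv_fin.
End Composition.

Arguments swapf : simpl never.

Lemma swapE a b c : pf (swap a b) c = swapf a b c.
Proof. by []. Qed.

Lemma swapf_l a b : swapf a b a = b.
Proof. by rewrite /swapf eqxx. Qed.

Lemma swapf_r a b : swapf a b b = a.
Proof. by rewrite /swapf eqxx; case: eqVneq => // ->. Qed.

Lemma swapf_o a b c : c != a -> c != b -> swapf a b c = c.
Proof. by move=> ha hb; rewrite /swapf (negbTE ha) (negbTE hb). Qed.

Lemma swapf_conj (p : perm) a b c :
  pf p (swapf a b c) = swapf (pf p a) (pf p b) (pf p c).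
Proof.
case: (eqVneq c a) => [->|ca]; first by rewrite !swapf_l.
case: (eqVneq c b) => [->|cb]; first by rewrite !swapf_r.
by rewrite !swapf_o // (inj_eq (@pf_inj p)).
Qed.

(* Identities between composites of transpositions of variables are decided by
   distinguishing all the cases of equality between the variables involved. *)
Ltac swap_cases := rewrite /swapf; repeat (match goal with |- context [?x == ?y] =>
  is_var x; is_var y;
  let H := fresh "H" in case: (eqVneq x y) => H; try subst; simpl end);
  try done; repeat match goal with H : is_true (?x != ?x) |- _ => by rewrite eqxx in H end.

Definition newn (s : seq nat) : nat := (foldr maxn 0 s).+1.

Lemma newn_notin s : newn s \notin s.
Proof.
suff H : forall x, x \in s -> x < newn s by apply/negP => /H; rewrite ltnn.
rewrite /newn; elim: s => //= y s IH x; rewrite inE => /orP [/eqP ->|/IH].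
  by rewrite ltnS leq_maxl.
by rewrite !ltnS => H; apply: leq_trans H (leq_maxr _ _).
Qed.

Definition nominal (X : PSet) : Prop :=
  [/\ (forall p x, (forall c, pf p c = c) -> act X p x = x),
      (forall p q r x, (forall c, pf r c = pf p (pf q c)) ->
                       act X r x = act X p (act X q x)) &
      (forall x, exists A, supports X A x)].

Section Nominal.
Variable X : PSet.
Hypothesis NX : nominal X.

Lemma act_id p x : (forall c, pf p c = c) -> act X p x = x.
Proof. by case: NX => H _ _; apply: H. Qed.

Lemma act_comp p q r x : (forall c, pf r c = pf p (pf q c)) ->
  act X r x = act X p (act X q x).
Proof. by case: NX => _ H _; apply: H. Qed.

Lemma has_supp x : exists A, supports X A x.
Proof. by case: NX => _ _ H; apply: H. Qed.

Lemma act_supp_agree A x p q : supports X A x ->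
  (forall c, c \in A -> pf p c = pf q c) -> act X p x = act X q x.
Proof.
move=> sA H.
have E : act X (comp_perm (inv_perm q) p) x = x by apply: sA => c cA /=; rewrite H // pfK.
rewrite -{2}E -(@act_comp q (comp_perm (inv_perm q) p) p) // => c /=.
by rewrite pinvK.
Qed.

Lemma supports_act A x p : supports X A x -> supports X (map (pf p) A) (act X p x).
Proof.
move=> sA q Hq; rewrite -(@act_comp q p (comp_perm q p)) //.
by apply: (act_supp_agree sA) => c cA /=; rewrite Hq // map_f.
Qed.

Lemma fresh_act c x p : fresh X c x -> fresh X (pf p c) (act X p x).
Proof.
case=> A [cA sA]; exists (map (pf p) A); split; last exact: supports_act.
by rewrite mem_map //; apply: pf_inj.
Qed.

Lemma swap_fresh a b x : fresh X a x -> fresh X b x -> act X (swap a b) x = x.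
Proof.
case=> A [aA sA]; case=> B [bB sB].
set d := newn (a :: b :: A ++ B).
have : d \notin a :: b :: A ++ B by apply: newn_notin.
rewrite !inE mem_cat !negb_or => /andP [da /andP [db /andP [dA dB]]].
have fix_bd : act X (swap b d) x = x.
  apply: sB => c cB; rewrite swapE swapf_o //.
    by apply: contraNneq bB => <-.
  by apply: contraNneq dB => <-.
have fix_ad : act X (swap a d) x = x.
  apply: sA => c cA; rewrite swapE swapf_o //.
    by apply: contraNneq aA => <-.
  by apply: contraNneq dA => <-.
case: (eqVneq a b) => [<-|ab].
  by apply: act_id => c; rewrite swapE /swapf; case: eqVneq => [->|//].
(* (a b) = (b d)(a d)(b d) *)
rewrite (@act_comp (swap b d) (comp_perm (swap a d) (swap b d))); last first.
  by move=> c /=; clearbody d; swap_cases.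
rewrite (@act_comp (swap a d) (swap b d) (comp_perm (swap a d) (swap b d))) //.
by rewrite fix_bd fix_ad fix_bd.
Qed.

Lemma exists_fresh (B : seq nat) (xs : seq (car X)) :
  exists c, c \notin B /\ forall x, List.In x xs -> fresh X c x.
Proof.
elim: xs B => [|x xs IH] B; first by exists (newn B); split => //; apply: newn_notin.
case: (has_supp x) => A sA; case: (IH (A ++ B)) => c [].
rewrite mem_cat negb_or => /andP [cA cB] H; exists c; split => // y /= [<-|/H //].
by exists A.
Qed.

Lemma swap_swap a b x : act X (swap a b) (act X (swap a b) x) = x.
Proof.
rewrite -(@act_comp (swap a b) (swap a b) id_perm) ?act_id // => c /=.
by rewrite swapfK.
Qed.

Lemma swap_comm3 a c d x : a != c -> a != d -> c != d ->
  act X (swap a d) (act X (swap c d) x) = act X (swap c d) (act X (swap a c) x).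
Proof.
move=> ac ad cd.
rewrite -!(@act_comp _ _ (comp_perm (swap a d) (swap c d))) // => e /=.
by swap_cases.
Qed.

Lemma alpha_any a x b y d : alpha X (a, x) (b, y) ->
  d != a -> d != b -> fresh X d x -> fresh X d y ->
  act X (swap a d) x = act X (swap b d) y.
Proof.
case=> c /= [ca cb cx cy E] da db dx dy.
case: (eqVneq d c) => [->//|dc].
have ac : a != c by apply/eqP => E'; apply: ca; rewrite E'.
have bc : b != c by apply/eqP => E'; apply: cb; rewrite E'.
rewrite -{1}(swap_fresh cx dx) -{1}(swap_fresh cy dy).
by rewrite !swap_comm3 1?eq_sym // 1?eq_sym // E.
Qed.

Lemma alpha_refl w : alpha X w w.
Proof.
case: (exists_fresh [:: w.1] [:: w.2]) => c [cw H].
have cw1 : c <> w.1 by apply/eqP; move: cw; rewrite inE.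
by exists c; split => //; apply: H; left.
Qed.

Lemma alpha_sym w w' : alpha X w w' -> alpha X w' w.
Proof. by case=> c [h1 h2 h3 h4 h5]; exists c; split. Qed.

Lemma alpha_trans w1 w2 w3 : alpha X w1 w2 -> alpha X w2 w3 -> alpha X w1 w3.
Proof.
case: w1 => a x; case: w2 => b y; case: w3 => e z => H1 H2.
case: (exists_fresh [:: a; b; e] [:: x; y; z]) => d [].
rewrite !inE !negb_or => /and3P [da db de] dF.
have fx : fresh X d x by apply: dF; left.
have fy : fresh X d y by apply: dF; right; left.
have fz : fresh X d z by apply: dF; right; right; left.
exists d; split => //=; try exact/eqP.
by rewrite (alpha_any H1) //; apply: alpha_any H2 _ _ fy fz.
Qed.

Lemma alpha_act p a x b y : alpha X (a, x) (b, y) ->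
  alpha X (pf p a, act X p x) (pf p b, act X p y).
Proof.
case=> c /= [ca cb cx cy E]; exists (pf p c) => /=; split.
- by move/pf_inj.
- by move/pf_inj.
- exact: fresh_act.
- exact: fresh_act.
have conj_swap e z : act X (swap (pf p e) (pf p c)) (act X p z) =
                     act X p (act X (swap e c) z).
  rewrite -(@act_comp _ p (comp_perm p (swap e c))) => [|f /=]; last by rewrite swapf_conj.
  by rewrite (@act_comp p (swap e c) (comp_perm p (swap e c))).
by rewrite !conj_swap E.
Qed.
End Nominal.

Lemma absT_eq (X : PSet) (C D : absT X) : proj1_sig C = proj1_sig D -> C = D.
Proof.
case: C => C HC; case: D => D HD /= E; subst D.
by rewrite (proof_irrelevance _ HC HD).
Qed.

Lemma mk_abs_rep (X : PSet) (C : absT X) : mk_abs X (abs_rep C) = C.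
Proof.
apply: absT_eq; rewrite /abs_rep.
by case: (constructive_indefinite_description _ _) => r /= ->.
Qed.

Section Abstraction.
Variable X : PSet.
Hypothesis NX : nominal X.

Lemma mk_abs_eq w w' : alpha X w w' -> mk_abs X w = mk_abs X w'.
Proof.
move=> H; apply: absT_eq; apply: functional_extensionality => z /=.
apply: propositional_extensionality; rewrite /cls; split => H'.
  exact: (alpha_trans NX (alpha_sym H) H').
exact: (alpha_trans NX H H').
Qed.

Lemma mk_abs_inj w w' : mk_abs X w = mk_abs X w' -> alpha X w w'.
Proof.
move=> E; have : proj1_sig (mk_abs X w) w' = proj1_sig (mk_abs X w') w' by rewrite E.
by rewrite /= /cls => ->; apply: alpha_refl.
Qed.

Lemma act_mk_abs p w :
  act (AbsP X) p (mk_abs X w) = mk_abs X (pf p w.1, act X p w.2).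
Proof.
apply: mk_abs_eq.
have : alpha X (abs_rep (mk_abs X w)) w by apply: mk_abs_inj; rewrite mk_abs_rep.
by case: (abs_rep _) => a x; case: w => b y; apply: alpha_act.
Qed.

Lemma nominal_AbsP : nominal (AbsP X).
Proof.
split.
- move=> p C Hp; rewrite -(mk_abs_rep C) act_mk_abs Hp (act_id NX) //.
  by case: (abs_rep C).
- move=> p q r C Hr; rewrite -(mk_abs_rep C) !act_mk_abs /= Hr.
  by rewrite (act_comp NX _ Hr).
- move=> C; rewrite -(mk_abs_rep C); case: (abs_rep C) => a x.
  case: (has_supp NX x) => A sA; exists (a :: A) => p Hp.
  rewrite act_mk_abs /= Hp ?inE ?eqxx // sA // => c cA.
  by apply: Hp; rewrite inE cA orbT.
Qed.
End Abstraction.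

Lemma nominal_AbsN k X : nominal X -> nominal (AbsN k X).
Proof. by move=> NX; elim: k => //= k IH; apply: nominal_AbsP. Qed.

Lemma abs_list_act k X (NX : nominal X) p l u : size l = k ->
  act (AbsN k X) p (abs_list k X l u) = abs_list k X (map (pf p) l) (act X p u).
Proof.
elim: k l => [|k IH] [|a l] // [Hl].
by rewrite [LHS](act_mk_abs (nominal_AbsN k NX)) /= IH.
Qed.

Lemma abs_list_surj k X (z : car (AbsN k X)) :
  exists l u, size l = k /\ z = abs_list k X l u.
Proof.
elim: k z => [|k IH] z /=; first by exists [::], z.
rewrite -(mk_abs_rep z); case: (abs_rep z) => a x.
by case: (IH x) => l [u [Hl ->]]; exists (a :: l), u; rewrite /= Hl.
Qed.

Lemma abs_list_inv k X (NX : nominal X) l l' u u' : size l = k -> size l' = k ->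
  abs_list k X l u = abs_list k X l' u' -> exists p, u' = act X p u.
Proof.
elim: k l l' u u' => [|k IH] [|a l] [|b l'] u u' //=.
  by move=> _ _ ->; exists id_perm; rewrite (act_id NX).
have NK := nominal_AbsN k NX.
move=> [Hl] [Hl'] /(mk_abs_inj NK) [c [_ _ _ _ /= E]].
pose s := comp_perm (swap b c) (swap a c).
have E' : abs_list k X l' u' = act (AbsN k X) s (abs_list k X l u).
  by rewrite (act_comp NK (p := swap b c) (q := swap a c)) // E swap_swap.
rewrite abs_list_act // in E'.
have Hm : size (map (pf s) l) = k by rewrite size_map.
case: (IH _ _ _ _ Hm Hl' (esym E')) => q ->.
by exists (comp_perm q s); rewrite -(act_comp NX (r := comp_perm q s)).
Qed.

Fixpoint pnames (ns : seq nat) (Y : nat -> Type) (G : forall k, Y k -> seq nat)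
  : Prod ns Y -> seq nat :=
  match ns return Prod ns Y -> seq nat with
  | [::] => fun _ => [::]
  | k :: ns' => fun t => G k t.1 ++ pnames G t.2
  end.

Section Products.
Variable ns : seq nat.

Lemma pmap_ext (Y Z : nat -> Type) (f g : forall n, Y n -> Z n) (t : Prod ns Y) :
  (forall n y, f n y = g n y) -> Defs.pmap f t = Defs.pmap g t.
Proof. by move=> H; elim: ns t => //= n ns' IH [y t]; rewrite H IH. Qed.

Lemma pmap_comp (Y Z W : nat -> Type) (f : forall n, Z n -> W n)
  (g : forall n, Y n -> Z n) (t : Prod ns Y) :
  Defs.pmap f (Defs.pmap g t) = Defs.pmap (fun n y => f n (g n y)) t.
Proof. by elim: ns t => //= n ns' IH [y t]; rewrite IH. Qed.

Lemma pmap_id (Y : nat -> Type) (f : forall n, Y n -> Y n) (t : Prod ns Y) :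
  (forall n y, f n y = y) -> Defs.pmap f t = t.
Proof. by move=> H; elim: ns t => [[]|n ns' IH [y t]] //=; rewrite H IH. Qed.

Lemma pmap_surj (Y Z : nat -> Type) (f : forall n, Y n -> Z n) :
  (forall n z, exists w, f n w = z) -> forall t : Prod ns Z, exists t0, Defs.pmap f t0 = t.
Proof.
move=> H; elim: ns => [|n ns' IH] /=; first by case; exists tt.
case=> z t; case: (H n z) => w <-; case: (IH t) => t0 <-.
by exists (w, t0).
Qed.

Lemma pmap_rel (Y Z W : nat -> Type) (f : forall n, Y n -> Z n)
  (g : forall n, Y n -> W n) :
  (forall n y y', f n y = f n y' -> g n y = g n y') ->
  forall t t' : Prod ns Y, Defs.pmap f t = Defs.pmap f t' -> Defs.pmap g t = Defs.pmap g t'.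
Proof.
move=> H; elim: ns => [|n ns' IH] //= [y t] [y' t'] [E1 E2].
by rewrite (H _ _ _ E1) (IH _ _ E2).
Qed.

Lemma pmap_supp (Y : nat -> Type) (h : perm -> forall n, Y n -> Y n) :
  (forall n y, exists A : seq nat,
     forall p, (forall c, c \in A -> pf p c = c) -> h p n y = y) ->
  forall t : Prod ns Y, exists A : seq nat,
    forall p, (forall c, c \in A -> pf p c = c) -> Defs.pmap (h p) t = t.
Proof.
move=> H; elim: ns => [|n ns' IH] /=; first by case; exists [::].
case=> y t; case: (H n y) => A HA; case: (IH t) => B HB.
exists (A ++ B) => p Hp; rewrite HA ?HB // => c cA; apply: Hp.
  by rewrite mem_cat cA orbT.
by rewrite mem_cat cA.
Qed.

Lemma pnames_pmap (Y Z : nat -> Type) (G : forall k, Z k -> seq nat)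
  (h : forall k, Y k -> Z k) (t : Prod ns Y) :
  pnames G (Defs.pmap h t) = pnames (fun k y => G k (h k y)) t.
Proof. by elim: ns t => //= k ns' IH [y t]; rewrite IH. Qed.

Lemma map_pnames (Y : nat -> Type) (G : forall k, Y k -> seq nat) f (t : Prod ns Y) :
  map f (pnames G t) = pnames (fun k y => map f (G k y)) t.
Proof. by elim: ns t => //= k ns' IH [y t]; rewrite map_cat IH. Qed.

Lemma pnames_ext (Y : nat -> Type) (G G' : forall k, Y k -> seq nat) (t : Prod ns Y) :
  (forall k y, G k y = G' k y) -> pnames G t = pnames G' t.
Proof. by move=> H; elim: ns t => //= k ns' IH [y t]; rewrite H IH. Qed.

Lemma pmap_ext_names (Y Z : nat -> Type) (G : forall k, Y k -> seq nat)
  (f1 f2 : forall k, Y k -> Z k) (P : nat -> Prop) :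
  (forall k y, (forall c, c \in G k y -> P c) -> f1 k y = f2 k y) ->
  forall t : Prod ns Y, (forall c, c \in pnames G t -> P c) ->
    Defs.pmap f1 t = Defs.pmap f2 t.
Proof.
move=> H; elim: ns => //= k ns' IH [y t] Hc.
rewrite H ?IH // => c cG; apply: Hc; rewrite mem_cat cG ?orbT //.
Qed.
End Products.

Lemma inr_existT_fst (A S : Type) (P : S -> Type) o o' (t : P o) (t' : P o') :
  (inr (existT P o t) : A + {x : S & P x}) = inr (existT P o' t') -> o = o'.
Proof.
move=> E; have := congr1 (fun z : A + {x : S & P x} =>
  if z is inr s then Some (projT1 s) else None) E.
by case.
Qed.

Lemma inr_existT_snd (A S : Type) (Hdec : forall x y : S, {x = y} + {x <> y})
  (P : S -> Type) o (t t' : P o) :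
  (inr (existT P o t) : A + {x : S & P x}) = inr (existT P o t') -> t = t'.
Proof.
move=> E; apply: (inj_pair2_eq_dec S Hdec).
exact: (congr1 (fun z : A + {x : S & P x} => if z is inr s then s else existT P o t) E).
Qed.

Lemma inj_nat_eq_dec (S : Type) (g : S -> nat) :
  injective g -> forall x y : S, {x = y} + {x <> y}.
Proof.
move=> g_inj x y; case: (eqVneq (g x) (g y)) => [/g_inj|ne]; [by left|right].
by move=> E; move: ne; rewrite E eqxx.
Qed.

Section Signature.
Variables (S : Type) (ar : S -> seq nat).

Lemma nominal_FaP X : nominal X -> nominal (FaP ar X).
Proof.
move=> NX; split.
- move=> p [c|[o t]] Hp /=; first by rewrite Hp.
  by rewrite pmap_id // => k z; rewrite (act_id (nominal_AbsN k NX)).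
- move=> p q r [c|[o t]] Hr /=; first by rewrite Hr.
  rewrite pmap_comp; congr (inr (existT _ o _)); apply: pmap_ext => k z.
  exact: (act_comp (nominal_AbsN k NX)).
- move=> [c|[o t]]; first by exists [:: c] => p Hp /=; rewrite Hp // inE.
  have [A HA] := @pmap_supp _ (fun k => car (AbsN k X))
    (fun p k z => act (AbsN k X) p z) (fun k z => has_supp (nominal_AbsN k NX) z) t.
  by exists A => p Hp /=; rewrite HA.
Qed.

Lemma nominal_Fan n : nominal (Fan ar n).
Proof.
elim: n => [|n IH] /=; last exact: nominal_FaP.
by split => //= x; exists [::].
Qed.

Fixpoint ren (n : nat) (f : nat -> nat) : car (Fn ar n) -> car (Fn ar n) :=
  match n return car (Fn ar n) -> car (Fn ar n) with
  | 0 => fun u => u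
  | n'.+1 => fun u => match u with
     | inl c => inl (f c)
     | inr (existT o t) => inr (existT _ o (Defs.pmap
         (fun k (tx : k.-tuple nat * car (Fn ar n')) => (map_tuple f tx.1, ren f tx.2)) t))
     end
  end.

Fixpoint names (n : nat) : car (Fn ar n) -> seq nat :=
  match n return car (Fn ar n) -> seq nat with
  | 0 => fun _ => [::]
  | n'.+1 => fun u => match u with
     | inl c => [:: c]
     | inr (existT o t) =>
         pnames (fun k (tx : k.-tuple nat * car (Fn ar n')) => val tx.1 ++ names tx.2) t
     end
  end.

Definition shape n (u : car (Fn ar n)) : car (Fn ar n) := ren (fun _ => 0) u.

Lemma act_ren n p u : act (Fn ar n) p u = ren (pf p) u.
Proof.
elim: n u => [|n IH] //= [c|[o t]] //=.
by congr (inr (existT _ o _)); apply: pmap_ext => k [tp x] /=; rewrite IH.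
Qed.

Lemma ren_comp n f g u : ren f (ren g u) = ren (f \o g) u :> car (Fn ar n).
Proof.
elim: n u => [|n IH] //= [c|[o t]] //=.
rewrite pmap_comp; congr (inr (existT _ o _)); apply: pmap_ext => k [tp x] /=.
by rewrite IH; congr (_, _); apply: val_inj; rewrite /= -map_comp.
Qed.

Lemma ren_ext n f g (u : car (Fn ar n)) :
  (forall c, c \in names u -> f c = g c) -> ren f u = ren g u.
Proof.
elim: n u => [|n IH] //= [c|[o t]] /= H; first by rewrite H ?inE.
congr (inr (existT _ o _)).
apply: (@pmap_ext_names _ _ _ _ _ _ (fun c => f c = g c)) H => k [tp x] /= Hc.
rewrite IH => [|c cx]; last by apply: Hc; rewrite mem_cat cx orbT.
congr (_, _); apply: val_inj => /=; apply/eq_in_map => c ct; apply: Hc.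
by rewrite mem_cat ct.
Qed.

Lemma ren_id n (u : car (Fn ar n)) : ren id u = u.
Proof.
elim: n u => [|n IH] //= [c|[o t]] //=.
congr (inr (existT _ o _)); apply: pmap_id => k [tp x] /=.
by rewrite IH; congr (_, _); apply: val_inj; rewrite /= map_id.
Qed.

Lemma names_ren n f (u : car (Fn ar n)) : names (ren f u) = map f (names u).
Proof.
elim: n u => [|n IH] //= [c|[o t]] //=.
rewrite pnames_pmap map_pnames; apply: pnames_ext => k [tp x] /=.
by rewrite IH map_cat.
Qed.

Lemma size_names_shape n (u v : car (Fn ar n)) :
  shape u = shape v -> size (names u) = size (names v).
Proof.
by rewrite /shape => E; rewrite -(size_map (fun _ => 0)) -names_ren E names_ren size_map.
Qed.

Lemma amap_act n p (u : car (Fn ar n)) :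
  amap (act (Fn ar n) p u) = act (Fan ar n) p (amap u).
Proof.
elim: n u => [|n IH] // [c|[o t]] //=.
rewrite !pmap_comp; congr (inr (existT _ o _)); apply: pmap_ext => k [tp x] /=.
by rewrite IH (abs_list_act (nominal_Fan n)) // size_tuple.
Qed.

Lemma amap_surj n : surj_map (@amap S ar n).
Proof.
elim: n => [|n IH] /=; first by move=> y; exists y.
case=> [c|[o t]]; first by exists (inl c).
have [t0 Ht0] : exists t0 : Prod (ar o) (fun k => (k.-tuple nat * car (Fn ar n))%type),
    Defs.pmap (fun k (w : k.-tuple nat * car (Fn ar n)) =>
                 abs_list k _ (val w.1) (amap w.2)) t0 = t.
  apply: pmap_surj => k z.
  case: (abs_list_surj z) => l [x [Hl ->]]; case: (IH x) => w <-.
  have Hl' : size l == k by apply/eqP.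
  by exists (Tuple Hl', w).
by exists (inr (existT _ o t0)); rewrite /= pmap_comp Ht0.
Qed.

Lemma map_tuple_const0 k (tp tp' : k.-tuple nat) :
  map_tuple (fun _ => 0) tp = map_tuple (fun _ => 0) tp'.
Proof.
apply: val_inj; apply: (@eq_from_nth _ 0); first by rewrite !size_map !size_tuple.
by move=> i; rewrite size_map size_tuple => Hi; rewrite !(nth_map 0) ?size_tuple.
Qed.

Hypothesis Hdec : forall x y : S, {x = y} + {x <> y}.

(* Terms identified by a^(n) have the same shape: equal abstractions have
   bodies related by a permutation, which does not change shapes. *)
Lemma amap_shape n (u v : car (Fn ar n)) : amap u = amap v -> shape u = shape v.
Proof.
rewrite /shape; elim: n u v => [|n IH] //= [c|[o t]] [c'|[o' t']] //= E.
have Eo := inr_existT_fst E; subst o'.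
have {E} := inr_existT_snd Hdec E; rewrite !pmap_comp => E.
congr (inr (existT _ o _)); move: E; apply: pmap_rel => k [tp x] [tp' x'] /= E.
rewrite (map_tuple_const0 tp tp'); congr (_, _).
have [p Hp] := abs_list_inv (nominal_Fan n) (size_tuple tp) (size_tuple tp') E.
rewrite -amap_act in Hp.
by rewrite -(IH _ _ (esym Hp)) act_ren ren_comp.
Qed.

Lemma In_map T U (f : T -> U) x s : List.In x s -> List.In (f x) (map f s).
Proof. by elim: s => //= y s IH [->|/IH]; [left|right]. Qed.

Lemma In_cat T (x : T) s1 s2 : List.In x s1 \/ List.In x s2 -> List.In x (s1 ++ s2).
Proof. by elim: s1 => [[//|//]|y s1 IH] /= [[->|H]|H]; auto. Qed.

Lemma In_allpairs T U V (f : T -> U -> V) a b s t :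
  List.In a s -> List.In b t -> List.In (f a b) [seq f x y | x <- s, y <- t].
Proof.
elim: s => //= x s IH [->|H] Hb; apply: In_cat; [left; exact: In_map|right; auto].
Qed.

Lemma In_mem (x : nat) s : x \in s -> List.In x s.
Proof. by elim: s => //= y s IH; rewrite inE => /orP [/eqP ->|/IH]; auto. Qed.

Fixpoint enumTup (D : seq nat) (k : nat) : seq (k.-tuple nat) :=
  match k return seq (k.-tuple nat) with
  | 0 => [:: [tuple]]
  | k'.+1 => [seq cons_tuple x tp | x <- D, tp <- enumTup D k']
  end.

Lemma enumTup_complete D k (tp : k.-tuple nat) :
  {subset tp <= D} -> List.In tp (enumTup D k).
Proof.
elim: k tp => [|k IH] tp H /=; first by left; rewrite (tuple0 tp).
case/tupleP: tp H => x tp H.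
have -> : [tuple of x :: tp] = cons_tuple x tp by apply: val_inj.
apply: (@In_allpairs _ _ _ (@cons_tuple k nat)).
  by apply: In_mem; apply: H; rewrite inE eqxx.
by apply: IH => c ct; apply: H; rewrite inE ct orbT.
Qed.

Fixpoint enumP (ns : seq nat) (Y : nat -> Type) (g : forall k, Y k -> seq (Y k))
  : Prod ns Y -> seq (Prod ns Y) :=
  match ns return Prod ns Y -> seq (Prod ns Y) with
  | [::] => fun _ => [:: tt]
  | k :: ns' => fun t => [seq (a, b) | a <- g k t.1, b <- enumP g t.2]
  end.

Lemma enumP_complete ns (Y Z : nat -> Type) (g : forall k, Y k -> seq (Y k))
  (h : forall k, Y k -> Z k) (G : forall k, Y k -> seq nat) (D : seq nat) :
  (forall k y y', h k y = h k y' -> {subset G k y' <= D} -> List.In y' (g k y)) ->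
  forall t t' : Prod ns Y, Defs.pmap h t = Defs.pmap h t' ->
    {subset pnames G t' <= D} -> List.In t' (enumP g t).
Proof.
move=> H; elim: ns => [|k ns IH] /=; first by move=> _ []; left.
move=> [y t] [y' t'] [E1 E2] Hs; apply: In_allpairs.
  by apply: H E1 _ => c cG; apply: Hs; rewrite mem_cat cG.
by apply: IH E2 _ => c cG; apply: Hs; rewrite mem_cat cG orbT.
Qed.

Fixpoint enumT (D : seq nat) (n : nat) : car (Fn ar n) -> seq (car (Fn ar n)) :=
  match n return car (Fn ar n) -> seq (car (Fn ar n)) with
  | 0 => fun _ => [:: tt]
  | n'.+1 => fun s => match s with
     | inl _ => map (fun c => inl c) D
     | inr (existT o t) => map (fun t' => inr (existT _ o t'))
        (enumP (fun k (tx : k.-tuple nat * car (Fn ar n')) =>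
                  [seq (tp, x) | tp <- enumTup D k, x <- enumT D tx.2]) t)
     end
  end.

Lemma enumT_complete D n (s w : car (Fn ar n)) :
  shape s = shape w -> {subset names w <= D} -> List.In w (enumT D s).
Proof.
rewrite /shape; elim: n s w => [|n IH] /=; first by case; case; left.
case=> [c|[o t]] [c'|[o' t']] //= E Hs.
  by apply: In_map; apply: In_mem; apply: Hs; rewrite inE.
have Eo := inr_existT_fst E; subst o'.
apply: In_map; apply: (enumP_complete _ (inr_existT_snd Hdec E) Hs).
move=> k [tp x] [tp' x'] /= [_ Ex] Hs'; apply: In_allpairs.
  by apply: enumTup_complete => c ct; apply: Hs'; rewrite mem_cat ct.
by apply: IH Ex _ => c cx; apply: Hs'; rewrite mem_cat cx orbT.
Qed.

Lemma in_supp_names n c (u : car (Fn ar n)) : in_supp (Fn ar n) c u <-> c \in names u.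
Proof.
split.
  move=> H; apply/negPn/negP => cn; apply: H; exists (names u); split => // p Hp.
  by rewrite act_ren -{2}(ren_id u); apply: ren_ext.
move=> cn [A [cA sA]].
set d := newn (c :: A ++ names u).
have : d \notin c :: A ++ names u by apply: newn_notin.
rewrite inE mem_cat !negb_or => /and3P [dc dA dn].
have fix_cd : act (Fn ar n) (swap c d) u = u.
  apply: sA => e eA; rewrite swapE swapf_o //.
    by apply: contraNneq cA => <-.
  by apply: contraNneq dA => <-.
have : d \in names (act (Fn ar n) (swap c d) u).
  by rewrite act_ren names_ren; apply/mapP; exists c => //; rewrite swapE swapf_l.
by rewrite fix_cd (negbTE dn).
Qed.

Lemma supp_card_names n (u : car (Fn ar n)) :
  supp_card (Fn ar n) u (size (undup (names u))).
Proof.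
exists (undup (names u)); split; first exact: undup_uniq.
by split => // c; rewrite mem_undup; split => /in_supp_names.
Qed.

Definition normalize n (u : car (Fn ar n)) : car (Fn ar n) :=
  ren (fun x => index x (undup (names u))) u.

Lemma shape_normalize n (u : car (Fn ar n)) : shape (normalize u) = shape u.
Proof. by rewrite /shape /normalize ren_comp. Qed.

Lemma names_normalize n (u : car (Fn ar n)) :
  {subset names (normalize u) <= iota 0 (size (names u))}.
Proof.
move=> c; rewrite names_ren => /mapP [x xn ->].
rewrite mem_iota add0n /=; apply: leq_trans (size_undup (names u)).
by rewrite index_mem mem_undup.
Qed.

Lemma perm_of_seq U : uniq U ->
  exists p : perm, forall i, i < size U -> pf p i = nth 0 U i.
Proof.
elim/last_ind: U => [|U x IH]; first by exists id_perm.
rewrite rcons_uniq => /andP [xU uU]; case: (IH uU) => p Hp.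
exists (comp_perm (swap (pf p (size U)) x) p) => i.
rewrite size_rcons ltnS leq_eqVlt => /orP [/eqP ->|Hi] /=.
  by rewrite swapf_l nth_rcons ltnn eqxx.
rewrite (Hp i Hi) swapf_o ?nth_rcons ?Hi //.
  by apply/eqP; rewrite -Hp // => /pf_inj E; rewrite E ltnn in Hi.
by apply/eqP => E; move: xU; rewrite -E mem_nth.
Qed.

Lemma normalize_orbit n (u : car (Fn ar n)) :
  exists p : perm, u = act (Fn ar n) p (normalize u).
Proof.
case: (perm_of_seq (undup_uniq (names u))) => p Hp.
exists p; rewrite act_ren ren_comp -{1}(ren_id u); apply: ren_ext => c cn /=.
by rewrite Hp ?nth_index ?index_mem // mem_undup.
Qed.

(* The fibres of a^(n) are orbit-finite: their elements are permutations of
   normal forms of a fixed shape with names below a fixed bound. *)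
Lemma amap_orbit_finite_fibres n : orbit_finite_fibres (@amap S ar n).
Proof.
move=> y; have [u0 <-] := amap_surj y.
exists (enumT (iota 0 (size (names u0))) u0) => u /amap_shape Hshape.
exists (normalize u); last exact: normalize_orbit.
apply: enumT_complete; first by rewrite shape_normalize.
by rewrite -(size_names_shape Hshape); apply: names_normalize.
Qed.

Lemma bounded_max (P : nat -> Prop) k0 m : P k0 -> (forall k, P k -> k <= m) ->
  exists2 k, P k & forall k', P k' -> k' <= k.
Proof.
pose b k := if excluded_middle_informative (P k) then true else false.
have bP k : reflect (P k) (b k).
  by rewrite /b; case: excluded_middle_informative => H; constructor.
move=> Pk0 Pm; have [|k /bP Pk kmax] := @ex_maxnP b m (ex_intro _ k0 (introT (bP k0) Pk0)).
  by move=> k /bP; apply: Pm.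
by exists k => // k' /bP; apply: kmax.
Qed.

(* a^(n) is safe: in each fibre, support sizes are bounded by the common number
   of name occurrences, so some element has a support of maximal size. *)
Lemma amap_safe n : safe_map (@amap S ar n).
Proof.
move=> y; have [u0 Hu0] := amap_surj y.
pose P k := exists2 v, amap v = y & size (undup (names v)) = k.
have [k [v Hv <-] Hmax] : exists2 k, P k & forall k', P k' -> k' <= k.
  apply: (@bounded_max P _ (size (names u0))); first by exists u0.
  move=> k [v Hv <-]; apply: leq_trans (size_undup _) _.
  by rewrite (size_names_shape (amap_shape (etrans Hv (esym Hu0)))).
exists v => //; exists (size (undup (names v))); split; first exact: supp_card_names.
move=> w Hw; exists (size (undup (names w))); first exact: supp_card_names.
by apply: Hmax; exists w; rewrite // Hw Hv.
Qed.
End Signature.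

Unset Implicit Arguments.

Theorem proposition5p34 (S : Type) (ar : S -> seq nat)
    (HS : exists g : S -> nat, injective g) (n : nat) :
  surj_map (@amap S ar n) /\ orbit_finite_fibres (@amap S ar n) /\
  safe_map (@amap S ar n).
Proof.
have [g g_inj] := HS.
have Hdec : forall x y : S, {x = y} + {x <> y} := inj_nat_eq_dec g_inj.
split; first exact: amap_surj.
by split; [exact: amap_orbit_finite_fibres | exact: amap_safe].
Qed.
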